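(* Let $p$ be a Fermat prime, i.e. a prime of the form $p = 2^{m}+1$ with $m$ a positive integer. Then for every positive integer $k$, \[ \sum_{i=1}^{K(p^k)} \phi^{i}(p^k) \;=\; \phi(p^k) + \phi(\phi(p^k)) + \phi(\phi(\phi(p^k))) + \cdots + \phi(2) \;=\; \frac{2}{p+1}\left[p^k(p-1) + 2\left(\frac{p-1}{2}\right)^k\right] - 1 . \]
   Context: $\phi$ denotes Euler's totient function: $\phi(n)$ is the number of integers $x$ with $1\le x\le n$ and $\gcd(x,n)=1$ (so $\phi(1)=\phi(2)=1$). For $i\ge 1$, $\phi^{i}$ denotes the $i$-fold iterate $\phi\circ\cdots\circ\phi$. For an integer $n\ge 2$, $K(n)$ denotes the least positive integer $j$ with $\phi^{j}(n)=1$; the sum $\phi(n)+\phi(\phi(n))+\cdots+\phi(2)$ means $\sum_{i=1}^{K(n)}\phi^i(n)$, i.e. the iteration is summed up to and including the first iterate equal to $1$ (which for $n\ge 3$ is the term $\phi(2)$). *)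

From mathcomp Require Import all_boot all_order all_algebra.
Set Implicit Arguments. Unset Strict Implicit. Unset Printing Implicit Defensive.

(* K(n) = least positive j with phi^j(n) = 1.  For n >= 2, phi strictly
   decreases until it reaches 1, so such j exists and j <= n; we search
   j in 1..n. *)
Definition K (n : nat) : nat :=
  (find (fun j => iter j totient n == 1) (iota 1 n)).+1.

Definition totient_iter_sum (n : nat) : nat :=
  \sum_(1 <= i < (K n).+1) iter i totient n.

(* Write p = 2r + 1 with r = 2^n.  Then phi (p^(a+1) 2^(c+1)) = p^a 2^(c+n+1),
   so the phi-chain of p^k trades one factor p for 2^n at each step until only
   a power of 2 is left, and a power 2^b then runs down to 1 in b steps with sum
   2^b - 1.  Summing along the chain, (r + 1)(S + 1) obeys a recurrence in a
   whose solution is 2^c (r p^a + r^a); since (p - 1)/2 = r this is the stated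
   closed form. *)

From mathcomp Require Import all_boot all_order all_algebra.
From mathcomp Require Import zify ring.
Import GRing.Theory Num.Theory.

Lemma totient_ltn {n} : 1 < n -> totient n < n.
Proof.
move=> n_gt1; rewrite totient_count_coprime big_ltn ?(ltnW n_gt1) // /coprime gcdn0.
rewrite gtn_eqF // add0n.
have le_sum : \sum_(1 <= d < n) coprime n d <= \sum_(1 <= d < n) 1.
  by apply: leq_sum => d _; apply: leq_b1.
by apply: (leq_ltn_trans le_sum); rewrite sum_nat_const_nat muln1; lia.
Qed.

Lemma find_iota (P : pred nat) s n i :
  i < n -> P (s + i) -> (forall j, j < i -> ~~ P (s + j)) ->
  find P (iota s n) = i.
Proof.
elim: i s n => [|i IH] s [|n] //= lt_in.
- by rewrite addn0 => ->.
- move=> Psi notP; have := notP 0 isT; rewrite addn0 => /negbTE ->.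
  by congr _.+1; apply: IH => [||j lt_ji]; rewrite ?addSnnS //; apply: notP.
Qed.

Definition totient_sum_upto (L x : nat) : nat :=
  \sum_(1 <= i < L.+1) iter i totient x.

Lemma totient_sum_upto0 x : totient_sum_upto 0 x = 0.
Proof. by rewrite /totient_sum_upto big_geq. Qed.

Lemma totient_sum_uptoS L x :
  totient_sum_upto L.+1 x = totient x + totient_sum_upto L (totient x).
Proof.
rewrite /totient_sum_upto big_nat_recl //; congr (_ + _).
by apply: eq_bigr => i _; rewrite iterSr.
Qed.

Definition reaches_one (L x : nat) : Prop :=
  iter L totient x = 1 /\ forall j, j < L -> 1 < iter j totient x.

Lemma reaches_one_totient L x :
  1 < x -> reaches_one L (totient x) -> reaches_one L.+1 x.
Proof.
move=> x_gt1 [chain_end chain_gt1]; split; first by rewrite iterSr.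
by case=> [|j] // lt_jL; rewrite iterSr; apply: chain_gt1.
Qed.

Lemma reaches_one_ltn {L x} : reaches_one L x -> L < x.
Proof.
elim: L x => [|L IH] x [chain_end chain_gt1]; first by rewrite /= in chain_end; lia.
have x_gt1 : 1 < x by apply: (chain_gt1 0).
have chain : reaches_one L (totient x).
  by split=> [|j lt_jL]; rewrite -iterSr //; apply: chain_gt1.
exact: leq_ltn_trans (IH _ chain) (totient_ltn x_gt1).
Qed.

Lemma K_reaches_one L x : 0 < L -> reaches_one L x -> K x = L.
Proof.
case: L => [|L] // _ chain; have [chain_end chain_gt1] := chain.
rewrite /K; congr _.+1; apply: find_iota => [||j lt_jL].
- by have := reaches_one_ltn chain; lia.
- by rewrite add1n chain_end.
- by rewrite add1n neq_ltn chain_gt1 ?orbT.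
Qed.

Lemma totient_iter_sum_reaches_one L x :
  0 < L -> reaches_one L x -> totient_iter_sum x = totient_sum_upto L x.
Proof.
by move=> L_gt0 chain; rewrite /totient_iter_sum (K_reaches_one _ _ L_gt0 chain).
Qed.

Lemma totient_pow2S b : totient (2 ^ b.+1) = 2 ^ b.
Proof. by rewrite totient_pfactor //= mul1n. Qed.

Lemma reaches_one_pow2 b : reaches_one b (2 ^ b).
Proof.
elim: b => [|b IH]; first by split.
by apply: reaches_one_totient; rewrite ?totient_pow2S // -{1}(expn0 2) ltn_exp2l.
Qed.

Lemma totient_sum_upto_pow2 b : totient_sum_upto b (2 ^ b) + 1 = 2 ^ b.
Proof.
elim: b => [|b IH]; first by rewrite totient_sum_upto0.
by rewrite totient_sum_uptoS totient_pow2S expnS -addnA IH; lia.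
Qed.

Section FermatPrime.

Variable n : nat.
Let r := 2 ^ n.
Let p := (2 ^ n.+1).+1.
Hypothesis p_prime : prime p.

Lemma fermat_eq : p = 2 * r + 1.
Proof. by rewrite /p /r expnS addn1. Qed.

Lemma totient_fermat_pow a : totient (p ^ a.+1) = p ^ a * 2 ^ n.+1.
Proof. by rewrite totient_pfactor //= mulnC. Qed.

Lemma totient_fermat_pow_mul_pow2 a c :
  totient (p ^ a.+1 * 2 ^ c.+1) = p ^ a * 2 ^ (c + n).+1.
Proof.
have p_odd : odd p by rewrite /p /= oddX.
rewrite totient_coprime; last by rewrite coprimeXl // coprimeXr // coprimen2.
by rewrite totient_fermat_pow totient_pow2S -addnS expnD; ring.
Qed.

Lemma reaches_one_fermat a c : reaches_one (a * n.+1 + c.+1) (p ^ a * 2 ^ c.+1).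
Proof.
elim: a c => [|a IH] c; first by rewrite mul0n mul1n; apply: reaches_one_pow2.
have -> : a.+1 * n.+1 + c.+1 = (a * n.+1 + (c + n).+1).+1 by lia.
apply: reaches_one_totient; last by rewrite totient_fermat_pow_mul_pow2.
have : 0 < p ^ a.+1 by rewrite expn_gt0 prime_gt0.
by have := ltn_expl c.+1 (ltnSn 1); nia.
Qed.

Lemma totient_sum_upto_fermat a c :
  (r + 1) * (totient_sum_upto (a * n.+1 + c.+1) (p ^ a * 2 ^ c.+1) + 1) =
  2 ^ c.+1 * (r * p ^ a + r ^ a).
Proof.
elim: a c => [|a IH] c.
  by rewrite mul0n mul1n totient_sum_upto_pow2 expn0 muln1 mulnC.
have -> : a.+1 * n.+1 + c.+1 = (a * n.+1 + (c + n).+1).+1 by lia.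
rewrite totient_sum_uptoS totient_fermat_pow_mul_pow2 -addnA mulnDr IH.
rewrite (expnS 2 (c + n)) expnD -/r !expnS fermat_eq; ring.
Qed.

Lemma totient_iter_sum_fermat_pow k :
  (r + 1) * (totient_iter_sum (p ^ k.+1) + 1) = 2 * (r * p ^ k.+1 + r ^ k.+1).
Proof.
have chain : reaches_one (k * n.+1 + n.+1).+1 (p ^ k.+1).
  apply: reaches_one_totient.
    by rewrite -{1}(expn0 p) ltn_exp2l // prime_gt1.
  by rewrite totient_fermat_pow; apply: reaches_one_fermat.
rewrite (totient_iter_sum_reaches_one _ _ _ chain) // totient_sum_uptoS.
rewrite totient_fermat_pow -addnA mulnDr totient_sum_upto_fermat.
by rewrite !expnS -/r fermat_eq; ring.
Qed.

End FermatPrime.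

Local Open Scope ring_scope.

Theorem theorem4p8 (p m k : nat) :
  prime p -> (0 < m)%N -> p = (2 ^ m).+1 -> (0 < k)%N ->
  (totient_iter_sum (p ^ k))%:R =
    (2%:R / (p%:R + 1)) *
      ((p ^ k)%:R * (p%:R - 1) + 2%:R * ((p%:R - 1) / 2%:R) ^+ k) - 1
    :> rat.
Proof.
case: m k => [|n] [|k] // p_prime _ p_eq _; subst p.
move: (totient_iter_sum_fermat_pow n p_prime k) => /(congr1 (fun z => z%:R : rat)).
rewrite fermat_eq; set N := totient_iter_sum _.
rewrite !(natrM, natrD, natrX); set r : rat := 2 ^+ n => sum_eq.
have r1_neq0 : r + 1 != 0 by rewrite /r -natrX natr1 pnatr_eq0.
have -> : N%:R = 2 * (r * (2 * r + 1) ^+ k.+1 + r ^+ k.+1) / (r + 1) - 1.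
  by rewrite -sum_eq; field.
have -> : (2 * r + 1 - 1) / 2 = r by field.
have -> : 2 * r + 1 + 1 = 2 * (r + 1) by ring.
by field.
Qed.
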